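(* Let $C$ be a genus $3$ hyperelliptic curve over $\mathbb{C}$ with equation $y^2=g(x)$ for $g(x)$ a separable degree-$8$ polynomial. Let $w\in\mathbb{C}$ with $g(w)\ne0$, let $P_m^w$ be one of the two points of $C$ over $x=w$, and let $f(x)=(g(x))^{1/2}$ denote the local branch of the square root near $x=w$ whose value at $w$ is the $y$-coordinate of $P_m^w$. Let $N=\min\{n\in\mathbb{N}: n\ge5,\ f^{(n)}(w)\neq0\}$, where $f^{(n)}$ is the $n$-th derivative. Then $P_m^w$ has $2$-weight $N-5$. In particular, $P_m^w$ is a $2$-Weierstrass point if and only if $f^{(5)}(w)=0$.
   Context: For a point $P$ on a smooth projective curve $C$ of genus $g\ge2$, let $d_2=\dim H^0(C,(\Omega^1)^2)=3(g-1)$ (holomorphic quadratic differentials). Choose a basis $\psi_1,\dots,\psi_{d_2}$ with strictly increasing orders of vanishing at $P$ and set $n_i=\mathrm{ord}_P(\psi_i)+1$; the $2$-weight of $P$ is $w^{(2)}(P)=\sum_i(n_i-i)$, and $P$ is a $2$-Weierstrass point if $w^{(2)}(P)>0$. *)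

From mathcomp Require Import all_boot all_algebra all_field.
Set Implicit Arguments.
Unset Strict Implicit.
Unset Printing Implicit Defensive.
Import GRing.Theory Num.Theory.
Local Open Scope ring_scope.

Section Hyperelliptic.
Variable F : numClosedFieldType.

Definition ps := nat -> F.
Definition ps_poly (p : {poly F}) : ps := fun n => p`_n.
Definition ps_add (a b : ps) : ps := fun n => a n + b n.
Definition ps_mul (a b : ps) : ps := fun n => \sum_(i < n.+1) a i * b (n - i)%N.

(* coefficients s_0..s_n of the unique power series s with s_0 = b and
   s^2 = u (requires u_0 = b^2, b <> 0) *)
Fixpoint sqrt_seq (u : ps) (b : F) (n : nat) : seq F :=
  match n with
  | 0 => [:: b]
  | n'.+1 => let s := sqrt_seq u b n' in
      rcons s ((u n - \sum_(1 <= i < n) s`_i * s`_(n - i)) / (2%:R * b))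
  end.
Definition ps_sqrt (u : ps) (b : F) : ps := fun n => (sqrt_seq u b n)`_n.

Definition ps_has_val (s : ps) (v : int) : Prop :=
  exists n : nat, v = n%:Z /\ s n != 0 /\ forall m, (m < n)%N -> s m = 0.
Definition ps_val_ge (s : ps) (v : int) : Prop :=
  forall n : nat, (n%:Z < v) -> s n = 0.

(* polynomial t^M p(1/t), for M >= deg p *)
Definition rev_poly (M : nat) (p : {poly F}) : {poly F} :=
  \poly_(k < M.+1) p`_(M - k).

Definition hyperelliptic_genus3 (g : {poly F}) : Prop :=
  size g = 9%N /\ separable.separable_poly g.

(* points of the smooth projective model: affine points (a,b) with
   b^2 = g(a), and the two points at infinity, indexed by c with
   c^2 = lead_coef g (the value of y/x^4 there) *)
Inductive point := Aff of F & F | Inf of F.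

Definition on_curve (g : {poly F}) (P : point) : Prop :=
  match P with
  | Aff a b => b ^+ 2 = g.[a]
  | Inf c => c ^+ 2 = lead_coef g
  end.

(* A meromorphic quadratic differential is h dx^2 with h in the function
   field C(x) (+) C(x) y; the triple (p, q, d) denotes ((p + q y)/d) dx^2
   (with d <> 0). *)
Definition qdiff := ({poly F} * {poly F} * {poly F})%type.
Definition qd_num1 (w : qdiff) := w.1.1.
Definition qd_numy (w : qdiff) := w.1.2.
Definition qd_den (w : qdiff) := w.2.
Definition qd_valid (w : qdiff) : Prop := qd_den w != 0.

(* Equality in the function field (1, y is a basis of K over C(x)). *)
Definition qd_eq (w1 w2 : qdiff) : Prop :=
  qd_num1 w1 * qd_den w2 = qd_num1 w2 * qd_den w1 /\
  qd_numy w1 * qd_den w2 = qd_numy w2 * qd_den w1.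
Definition qd_zero : qdiff := (0, 0, 1).
Definition qd_add (w1 w2 : qdiff) : qdiff :=
  (qd_num1 w1 * qd_den w2 + qd_num1 w2 * qd_den w1,
   qd_numy w1 * qd_den w2 + qd_numy w2 * qd_den w1,
   qd_den w1 * qd_den w2).
Definition qd_scale (c : F) (w : qdiff) : qdiff :=
  (c *: qd_num1 w, c *: qd_numy w, qd_den w).

(* Local data at a point P: a power series S and an integer shift e such
   that ord_P(w) = ord_t(S) + e, where t is a local parameter at P:
   - (a,b), b <> 0 : t = x - a, y = sqrt(g(a+t)) with value b, dx = dt;
   - (a,0)         : t with x = a + t^2, y = t * sqrt(g1(a+t^2)) where
                     g = (x-a) g1, dx = 2t dt;
   - infinity c    : t = 1/x, y = t^-4 v(t), v = sqrt(t^8 g(1/t)) with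
                     v(0) = c, dx = -t^-2 dt. *)
Definition local_data (g : {poly F}) (P : point) (w : qdiff) : ps * int :=
  let p := qd_num1 w in let q := qd_numy w in let d := qd_den w in
  match P with
  | Aff a b =>
    if b != 0 then
      let sh := fun r : {poly F} => r \Po ('X + a%:P) in
      let Y := ps_sqrt (ps_poly (sh g)) b in
      (ps_add (ps_poly (sh p)) (ps_mul (ps_poly (sh q)) Y),
       - (mup a d)%:Z)
    else
      let g1 := g %/ ('X - a%:P) in
      let sh := fun r : {poly F} => r \Po ('X ^+ 2 + a%:P) in
      let Y := ps_mul (ps_poly 'X) (ps_sqrt (ps_poly (sh g1)) (sqrtC g1.[a])) in
      (ps_add (ps_poly (sh p)) (ps_mul (ps_poly (sh q)) Y),
       - (2 * mup a d)%N%:Z + 2)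
  | Inf c =>
    let M := (size p + size q + size d + 4)%N in
    let V := ps_sqrt (ps_poly (rev_poly 8 g)) c in
    (ps_add (ps_poly (rev_poly M p)) (ps_mul (ps_poly (rev_poly (M - 4) q)) V),
     - M%:Z + (size d).-1%:Z - 4)
  end.

Definition qd_has_ord (g : {poly F}) (P : point) (w : qdiff) (k : int) : Prop :=
  ps_has_val (local_data g P w).1 (k - (local_data g P w).2).
Definition qd_ord_ge (g : {poly F}) (P : point) (w : qdiff) (k : int) : Prop :=
  ps_val_ge (local_data g P w).1 (k - (local_data g P w).2).

Definition holomorphic_qd (g : {poly F}) (w : qdiff) : Prop :=
  qd_valid w /\ forall P, on_curve g P -> qd_ord_ge g P w 0.

(* d_2 = 3(g-1) = 6 for genus 3 *)
Definition lincomb (c : 'I_6 -> F) (psi : 'I_6 -> qdiff) : qdiff :=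
  \big[qd_add/qd_zero]_(i < 6) qd_scale (c i) (psi i).

Definition is_basis_H0_2K (g : {poly F}) (psi : 'I_6 -> qdiff) : Prop :=
  (forall i, holomorphic_qd g (psi i)) /\
  (forall c : 'I_6 -> F, qd_eq (lincomb c psi) qd_zero -> forall i, c i = 0) /\
  (forall w, holomorphic_qd g w -> exists c, qd_eq w (lincomb c psi)).

Definition adapted_basis (g : {poly F}) (P : point)
    (psi : 'I_6 -> qdiff) (o : 'I_6 -> nat) : Prop :=
  is_basis_H0_2K g psi /\
  (forall i, qd_has_ord g P (psi i) (o i)%:Z) /\
  (forall i j : 'I_6, (i < j)%N -> (o i < o j)%N).

(* w^(2)(P) = sum_i (n_i - i) with n_i = ord_P(psi_i) + 1, i = 1..6 *)
Definition weight_of (o : 'I_6 -> nat) : nat := \sum_(i < 6) (o i - i)%N.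

Definition two_weight (g : {poly F}) (P : point) (wt : nat) : Prop :=
  exists psi o, adapted_basis g P psi o /\ wt = weight_of o.

(* n-th derivative at w of the local branch f of sqrt(g) near x = w with
   f(w) = b: n! times the n-th Taylor coefficient of the power series f
   with f(w) = b and f^2 = g(w + t). *)
Definition branch_deriv (g : {poly F}) (w b : F) (n : nat) : F :=
  n`!%:R * ps_sqrt (ps_poly (g \Po ('X + w%:P))) b n.

End Hyperelliptic.

From mathcomp Require Import all_boot all_algebra all_field.
From mathcomp Require Import Rstruct complex.
From Stdlib Require Rdefinitions.
From mathcomp Require Import zify ring.

(* Away from the branch points t = x - w is a local parameter at (w, b) and
   y = Y(t), where Y is the power series with Y(0) = b and Y^2 = g(w + t).
   Holomorphy at all points, in particular at the two points over each value of
   x and at the two points at infinity, forces a holomorphic quadratic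
   differential to be (P(x) + c y) dx^2 / g(x) with deg P <= 4; since g does not
   vanish at w, its order at (w, b) is the order of P(w + t) + c Y(t).  That
   order is at most 4 unless P(w + t) = - c (Y_0 + ... + Y_4 t^4), and then it is
   N, the order of Y beyond degree 4.  The orders 0, ..., 4, N are realised by
   (x - w)^i dx^2 / g and (y - T(x)) dx^2 / g, T the Taylor polynomial of y of
   degree 4, so an adapted basis has exactly these orders and the 2-weight is
   N - 5.  Finally the n-th derivative of the branch is n! Y_n. *)

Set Implicit Arguments.
Unset Strict Implicit.
Unset Printing Implicit Defensive.
Import GRing.Theory Num.Theory.
Local Open Scope ring_scope.

Section Hyperelliptic.
Variable F : numClosedFieldType.
Implicit Types (p q d r g : {poly F}) (a : F) (W : qdiff F) (s u : ps F) (b : F).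

Definition ps_trunc n s : {poly F} := \poly_(i < n.+1) s i.

Lemma coef_ps_trunc n s j : (ps_trunc n s)`_j = if (j <= n)%N then s j else 0.
Proof. by rewrite coef_poly ltnS. Qed.

Lemma ps_mul_polyE p q s j :
  (forall i, (i <= j)%N -> q`_i = s i) -> ps_mul (ps_poly p) s j = (p * q)`_j.
Proof. by move=> qs; rewrite coefM; apply: eq_bigr => i _; rewrite qs ?leq_subr. Qed.

Lemma ps_mul_poly_trunc n p s j :
  (j <= n)%N -> ps_mul (ps_poly p) s j = (p * ps_trunc n s)`_j.
Proof. by move=> jn; apply: ps_mul_polyE => i ij; rewrite coef_ps_trunc (leq_trans ij jn). Qed.

Lemma ps_mul_polyC c s j : ps_mul (ps_poly c%:P) s j = c * s j.
Proof. by rewrite (ps_mul_poly_trunc _ _ (leqnn j)) coefCM coef_ps_trunc leqnn. Qed.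

Lemma ps_mul_X s j : ps_mul (ps_poly 'X) s j = if j == 0%N then 0 else s j.-1.
Proof.
rewrite (ps_mul_poly_trunc _ _ (leqnn j)) coefXM coef_ps_trunc.
by case: j => //= j; rewrite leqnSn.
Qed.

Lemma coefM_low p q K :
  (forall j, (j < K)%N -> p`_j = 0) -> forall j, (j < K)%N -> (p * q)`_j = 0.
Proof.
move=> p_low j jK; rewrite coefM big1 // => i _.
by rewrite p_low ?mul0r // (leq_ltn_trans _ jK) // -ltnS.
Qed.

Lemma coefM_lowest p q K :
  (forall j, (j < K)%N -> p`_j = 0) -> (p * q)`_K = p`_K * q`_0.
Proof.
move=> p_low; rewrite coefM big_ord_recr /= subnn big1 ?add0r // => i _.
by rewrite p_low ?mul0r.
Qed.

Lemma coef_low_mulr p q K : q`_0 != 0 ->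
  (forall j, (j < K)%N -> (p * q)`_j = 0) -> forall j, (j < K)%N -> p`_j = 0.
Proof.
move=> q0 pq_low; elim/ltn_ind => j IH jK.
have p_low : forall i, (i < j)%N -> p`_i = 0 by move=> i ij; rewrite IH // (ltn_trans ij).
move: (pq_low j jK); rewrite (coefM_lowest q p_low) => /eqP.
by rewrite mulf_eq0 (negPf q0) orbF => /eqP.
Qed.

Lemma size_sqrt_seq u b n : size (sqrt_seq u b n) = n.+1.
Proof. by elim: n => //= n IH; rewrite size_rcons IH. Qed.

Lemma nth_sqrt_seq u b n i : (i <= n)%N -> (sqrt_seq u b n)`_i = ps_sqrt u b i.
Proof.
elim: n => [|n IH] hi; first by move: hi; rewrite leqn0 => /eqP ->.
case: (ltngtP i n.+1) hi => [lt_in _|//|-> _] //.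
by rewrite /= nth_rcons size_sqrt_seq lt_in IH.
Qed.

Lemma ps_sqrt0 u b : ps_sqrt u b 0 = b.
Proof. by []. Qed.

Lemma ps_sqrtS u b n : ps_sqrt u b n.+1 =
  (u n.+1 - \sum_(1 <= i < n.+1) ps_sqrt u b i * ps_sqrt u b (n.+1 - i)%N) / (2%:R * b).
Proof.
rewrite {1}/ps_sqrt /= nth_rcons size_sqrt_seq ltnn eqxx.
congr ((_ - _) / _); apply: eq_big_nat => i /andP[i_gt0 i_le].
by rewrite !nth_sqrt_seq //; lia.
Qed.

Lemma ps_sqrtN u b n : b != 0 -> ps_sqrt u (- b) n = - ps_sqrt u b n.
Proof.
move=> b0; elim/ltn_ind: n => [[|n]] IH //; rewrite !ps_sqrtS.
rewrite mulrN invrN mulrN; congr (- ((_ - _) / _)).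
by apply: eq_big_nat => i /andP[i_gt0 i_le]; rewrite !IH ?mulrNN //; lia.
Qed.

Lemma ps_sqrt_odd u b : (forall k, odd k -> u k = 0) -> forall k, odd k -> ps_sqrt u b k = 0.
Proof.
move=> u_odd; elim/ltn_ind => [[|n]] IH // n_odd.
rewrite ps_sqrtS u_odd // big_nat big1 ?subr0 ?mul0r // => i /andP[i_gt0 i_le].
case i_odd: (odd i); first by rewrite IH ?mul0r.
have i_le' : (i <= n.+1)%N by rewrite ltnW.
rewrite (IH (n.+1 - i)%N) ?mulr0 //; first lia.
by rewrite oddB // n_odd i_odd.
Qed.

Lemma ps_mul_sqrtN s u b n : b != 0 ->
  ps_mul s (ps_sqrt u (- b)) n = - ps_mul s (ps_sqrt u b) n.
Proof. by move=> b0; rewrite -sumrN; apply: eq_bigr => i _; rewrite ps_sqrtN // mulrN. Qed.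

Lemma comp_polyXsubC_K p a : (p \Po ('X - a%:P)) \Po ('X + a%:P) = p.
Proof. by have := comp_polyXaddC_K p (- a); rewrite polyCN opprK. Qed.

Lemma coef0_comp_XaddC p a : (p \Po ('X + a%:P))`_0 = p.[a].
Proof. by rewrite -horner_coef0 horner_comp !hornerE. Qed.

Lemma comp_XsubCX_XaddC a m : (('X - a%:P) ^+ m) \Po ('X + a%:P) = 'X^m.
Proof. by rewrite rmorphXn /= comp_polyB comp_polyX comp_polyC addrK. Qed.

Lemma dvdp_XsubCX_coef p a m :
  (forall j, (j < m)%N -> (p \Po ('X + a%:P))`_j = 0) -> ('X - a%:P) ^+ m %| p.
Proof.
move=> low; set P := p \Po ('X + a%:P).
have P_take : take_poly m P = 0.
  by apply/polyP => j; rewrite coef_take_poly coef0; case: ifP => // /low.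
have -> : p = P \Po ('X - a%:P) by rewrite comp_polyXaddC_K.
rewrite -[P](poly_take_drop m) P_take add0r comp_polyM comp_Xn_poly.
exact: dvdp_mull.
Qed.

Lemma mup_factor d a : d != 0 ->
  exists e, ~~ root e a /\ d = e * ('X - a%:P) ^+ (mup a d).
Proof.
move=> d0; have [m [e]] := multiplicity_XsubC d a; rewrite d0 /= => ea ed.
by exists e; split => //; rewrite {2}ed mupMr // mup_XsubCX eqxx.
Qed.

Lemma dvdp_mup d r : d != 0 -> (forall a, ('X - a%:P) ^+ (mup a d) %| r) -> d %| r.
Proof.
elim: {d}(size d) {-2}d (eqxx (size d)) r => [|n IH] d /eqP sd r d0 dvd_r.
  by move: d0; rewrite -size_poly_eq0 sd.
have [/eqP d1|d1] := eqVneq (size d) 1%N.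
  by rewrite (eqp_dvdl _ (_ : d %= 1)) ?dvd1p // -size_poly_eq1 d1.
have [a da] := closed_rootP d d1.
have [d' ed] := factor_theorem d a da.
have d'0 : d' != 0 by apply: contraNneq d0 => d'0; rewrite ed d'0 mul0r.
have mup_d : mup a d = (mup a d').+1.
  by rewrite ed mupM ?polyXsubC_eq0 // (mup_XsubCX 1) eqxx addn1.
have : ('X - a%:P) %| r by rewrite (dvdp_trans _ (dvd_r a)) // mup_d exprS dvdp_mulr.
rewrite dvdp_XsubCl => /factor_theorem [r' er].
rewrite ed er dvdp_mul2r ?polyXsubC_eq0 //; apply: IH => //.
  by move: sd; rewrite ed size_mul ?polyXsubC_eq0 // size_XsubC addn2 => -[->].
move=> a'; have [<-|a'a] := eqVneq a a'.
  by have := dvd_r a; rewrite mup_d exprSr er dvdp_mul2r ?polyXsubC_eq0.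
have := dvd_r a'; rewrite ed mupMl ?root_XsubC 1?eq_sym // er.
by rewrite Gauss_dvdpl // coprimep_expl // coprimep_XsubC root_XsubC.
Qed.

Lemma mup_separable_root g a : separable.separable_poly g -> root g a -> mup a g = 1%N.
Proof.
move=> sep_g ga; have g0 : g != 0 by apply: separable.separable_poly_neq0.
apply/eqP; rewrite eqn_leq mup_leq ?separable.separable_nosquare ?size_XsubC //.
by rewrite (mup_geq _ 1 g0) expr1 dvdp_XsubCl.
Qed.

Lemma addr_subr_eq0 (x y : F) : x + y = 0 -> x - y = 0 -> x = 0 /\ y = 0.
Proof.
move=> xDy xBy; have : (x + y) + (x - y) = 0 by rewrite xDy xBy addr0.
rewrite addrACA subrr addr0 -mulr2n => /eqP; rewrite mulrn_eq0 /= => /eqP x0.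
by move: xDy; rewrite x0 add0r.
Qed.

(* The two points over a non-branch value of x carry opposite square roots;
   holomorphy at both separates the two summands of the local expansion. *)
Lemma ps_low_branches s1 s2 u c K : c != 0 ->
  (forall j, (j < K)%N -> ps_add s1 (ps_mul s2 (ps_sqrt u c)) j = 0) ->
  (forall j, (j < K)%N -> ps_add s1 (ps_mul s2 (ps_sqrt u (- c))) j = 0) ->
  forall j, (j < K)%N -> s1 j = 0 /\ ps_mul s2 (ps_sqrt u c) j = 0.
Proof.
move=> c0 low_c low_Nc j jK; apply: addr_subr_eq0; first exact: low_c.
by rewrite -ps_mul_sqrtN //; apply: low_Nc.
Qed.

Lemma coef_low_ps_mul q s K : s 0%N != 0 ->
  (forall j, (j < K)%N -> ps_mul (ps_poly q) s j = 0) ->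
  forall j, (j < K)%N -> q`_j = 0.
Proof.
move=> s0 low; apply: (@coef_low_mulr _ (ps_trunc K s)); first by rewrite coef_ps_trunc.
by move=> j jK; rewrite -ps_mul_poly_trunc ?low // ltnW.
Qed.

Lemma size_rev_poly_low M p K :
  (forall j, (j < K)%N -> (rev_poly M p)`_j = 0) -> (size p <= M.+1)%N ->
  (size p <= M.+1 - K)%N.
Proof.
move=> low sp; apply/leq_sizeP => i iK.
have [iM|iM] := leqP i M; last exact: (leq_sizeP _ _ sp).
have := low (M - i)%N; rewrite coef_poly subKn // ltnS leq_subr; apply; lia.
Qed.

Lemma qd_ord_ge0_Aff g W a b : b != 0 -> qd_ord_ge g (Aff a b) W 0 ->
  forall j, (j < mup a (qd_den W))%N -> (local_data g (Aff a b) W).1 j = 0.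
Proof. by move=> b0 holo j jm; apply: holo; rewrite /local_data b0 /= sub0r opprK ltz_nat. Qed.

Lemma qd_ord_ge0_branch g W a : qd_ord_ge g (Aff a 0) W 0 ->
  forall j, (j + 2 < 2 * mup a (qd_den W))%N -> (local_data g (Aff a 0) W).1 j = 0.
Proof.
move=> holo j jm; apply: holo; rewrite /local_data eqxx /=.
by move: jm; set m := mup a _; clear; lia.
Qed.

Lemma qd_ord_ge0_Inf g W c : qd_valid W -> qd_ord_ge g (Inf c) W 0 ->
  forall j, (j < size (qd_num1 W) + size (qd_numy W) + 9)%N ->
  (local_data g (Inf c) W).1 j = 0.
Proof.
move=> W0 holo j jM; apply: holo; rewrite /local_data /=.
have : (0 < size (qd_den W))%N by rewrite size_poly_gt0.
move: jM; rewrite /qd_num1 /qd_numy /qd_den.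
move: (size _) (size _) (size _) => x y z; clear; lia.
Qed.

Lemma holomorphic_size_at_infinity g W c : c != 0 -> qd_valid W ->
  qd_ord_ge g (Inf c) W 0 -> qd_ord_ge g (Inf (- c)) W 0 ->
  (size (qd_num1 W) <= size (qd_den W) - 4)%N /\
  (size (qd_numy W) <= size (qd_den W) - 8)%N.
Proof.
move=> c0 W0 /(qd_ord_ge0_Inf W0) low_c /(qd_ord_ge0_Inf W0) low_Nc.
have {low_c low_Nc}low := ps_low_branches c0 low_c low_Nc.
case: W W0 low => [[p q] d] /=; rewrite /qd_num1 /qd_numy /qd_den /= => d0 low.
have sd : (0 < size d)%N by rewrite size_poly_gt0.
have /size_rev_poly_low sp : forall j, (j < size p + size q + 9)%N -> _ := fun j jK => (low j jK).1.
have /size_rev_poly_low sq := coef_low_ps_mul c0 (fun j jK => (low j jK).2).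
move: sp sq sd; set x := size p; set y := size q; set z := size d; clear; lia.
Qed.

Lemma holomorphic_dvdp_unbranched g W a : qd_valid W -> ~~ root g a ->
  (forall P, on_curve g P -> qd_ord_ge g P W 0) ->
  ('X - a%:P) ^+ (mup a (qd_den W)) %| qd_num1 W /\
  ('X - a%:P) ^+ (mup a (qd_den W)) %| qd_numy W.
Proof.
move=> W0 ga holo; set b := sqrtC g.[a]; have b0 : b != 0 by rewrite sqrtC_eq0.
have /(qd_ord_ge0_Aff b0) low_b := holo (Aff a b) (sqrtCK _).
have Nb0 : - b != 0 by rewrite oppr_eq0.
have /(qd_ord_ge0_Aff Nb0) low_Nb := holo (Aff a (- b)) (etrans (sqrrN _) (sqrtCK _)).
move: low_b low_Nb; rewrite /local_data b0 Nb0 /= => low_b low_Nb.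
have {low_b low_Nb}low := ps_low_branches b0 low_b low_Nb.
split; apply: dvdp_XsubCX_coef; first by move=> j /low [].
exact: coef_low_ps_mul b0 (fun j jK => (low j jK).2).
Qed.

Lemma comp_polyXsqaddC p a : p \Po ('X ^+ 2 + a%:P) = (p \Po ('X + a%:P)) \Po 'X^2.
Proof. by rewrite -comp_polyA comp_polyD comp_polyX comp_polyC. Qed.

Definition ps_even s : ps F := fun k => s (2 * k)%N.

Section BranchSeries.
Variables (P Q : {poly F}) (Z : ps F).
Hypothesis Z_odd : forall k, odd k -> Z k = 0.

Let S := ps_add (ps_poly (P \Po 'X^2)) (ps_mul (ps_poly (Q \Po 'X^2)) (ps_mul (ps_poly 'X) Z)).

Lemma coef_branch_series n j : (j <= n)%N ->
  S j = (P \Po 'X^2 + 'X * ((Q * ps_trunc n (ps_even Z)) \Po 'X^2))`_j.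
Proof.
move=> jn; rewrite /S /ps_add coefD comp_polyM mulrCA.
congr (_ + _); apply: ps_mul_polyE => i ij; rewrite ps_mul_X coefXM.
case: i ij => //= i ij; rewrite coef_comp_poly_Xn // coef_ps_trunc.
case: ifP => [/dvdnP [k ik]|]; last by move/negbT; rewrite dvdn2 negbK => /Z_odd ->.
by rewrite ik mulnK // ifT /ps_even 1?mulnC //; lia.
Qed.

Lemma branch_series_even i : S (2 * i)%N = P`_i.
Proof.
rewrite (coef_branch_series (leqnn _)) coefD coef_comp_poly_Xn // dvdn_mulr // mulKn //.
rewrite coefXM; case: i => [|i]; first by rewrite addr0.
have -> : (2 * i.+1 == 0)%N = false by [].
have -> : (2 * i.+1).-1 = (2 * i).+1 by lia.
by rewrite coef_comp_poly_Xn // dvdn2 /= oddM addr0.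
Qed.

Lemma branch_series_odd i : S (2 * i).+1 = ps_mul (ps_poly Q) (ps_even Z) i.
Proof.
rewrite (coef_branch_series (leqnn _)) coefD coef_comp_poly_Xn // dvdn2 /= oddM /= add0r.
by rewrite coefXM /= coef_comp_poly_Xn // dvdn_mulr // mulKn // -ps_mul_poly_trunc //; lia.
Qed.

End BranchSeries.

Lemma separable_divXsubC_root g a : separable.separable_poly g -> root g a ->
  ~~ root (g %/ ('X - a%:P)) a.
Proof.
move=> sep_g ga; have g0 : g != 0 by apply: separable.separable_poly_neq0.
have eg : g = g %/ ('X - a%:P) * ('X - a%:P) by rewrite divpK // dvdp_XsubCl.
have g10 : g %/ ('X - a%:P) != 0 by apply: contraNneq g0 => g10; rewrite eg g10 mul0r.
have := mup_separable_root sep_g ga; rewrite {1}eg mupM ?polyXsubC_eq0 //.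
rewrite (mup_XsubCX 1) eqxx addn1 => -[]; apply: contra_eqN.
by rewrite -dvdp_XsubCl (XsubC_dvd _ g10) => /prednK <-.
Qed.

Lemma holomorphic_dvdp_branched g W a : separable.separable_poly g ->
  qd_valid W -> root g a -> (forall P, on_curve g P -> qd_ord_ge g P W 0) ->
  ('X - a%:P) ^+ (mup a (qd_den W)).-1 %| qd_num1 W /\
  ('X - a%:P) ^+ (mup a (qd_den W)).-1 %| qd_numy W.
Proof.
move=> sep_g W0 ga holo.
have on_a0 : on_curve g (Aff a 0) by rewrite /= expr0n; apply/esym/eqP.
have /qd_ord_ge0_branch low := holo _ on_a0.
move: low; rewrite /local_data eqxx /= !comp_polyXsqaddC.
set z := sqrtC _; set Z := ps_sqrt _ z; set m := mup a _ => low.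
pose P := qd_num1 W \Po ('X + a%:P); pose Q := qd_numy W \Po ('X + a%:P).
have Z_odd : forall k, odd k -> Z k = 0.
  by apply: ps_sqrt_odd => k k_odd; rewrite /ps_poly coef_comp_poly_Xn // dvdn2 k_odd.
split; apply: dvdp_XsubCX_coef.
  by move=> i im; rewrite -(branch_series_even P Q Z_odd) low //; lia.
apply: (@coef_low_ps_mul _ (ps_even Z)) => [|i im].
  by rewrite /ps_even muln0 /Z ps_sqrt0 /z sqrtC_eq0; exact: separable_divXsubC_root.
by rewrite -(branch_series_odd P Q Z_odd) low //; lia.
Qed.

Lemma size_cofactor p d g (P : {poly F}) k : g != 0 -> d != 0 -> p * g = P * d ->
  (size p <= size d - k)%N -> (size P <= size g - k)%N.
Proof.
move=> g0 d0 pgPd sp; have [p0|p0] := eqVneq p 0.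
  move: pgPd; rewrite p0 mul0r => /esym/eqP; rewrite mulf_eq0 (negPf d0) orbF.
  by move=> /eqP ->; rewrite size_poly0.
have P0 : P != 0 by apply: contraNneq (mulf_neq0 p0 g0) => P0; rewrite pgPd P0 mul0r.
have := congr1 (fun r : {poly F} => size r) pgPd; rewrite /= !size_mul //.
have := size_poly_gt0 p; have := size_poly_gt0 P; rewrite p0 P0.
move: sp; set x := size p; set y := size P; set z := size d; set t := size g; lia.
Qed.

(* Holomorphic quadratic differentials are the (P(x) + c y) dx^2 / g(x) with
   deg P <= 4: the conditions at finite points make g/d cancel, those at the
   two points at infinity bound the degrees. *)
Lemma holomorphic_qd_shape g W : hyperelliptic_genus3 g -> holomorphic_qd g W ->
  exists (P : {poly F}) (c : F), (size P <= 5)%N /\ qd_eq W (P, c%:P, g).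
Proof.
move=> [sg sep_g] [W0 holo]; have g0 : g != 0 by rewrite -size_poly_eq0 sg.
have dvd_num a : ('X - a%:P) ^+ mup a (qd_den W) %| qd_num1 W * g /\
                 ('X - a%:P) ^+ mup a (qd_den W) %| qd_numy W * g.
  have [ga|ga] := boolP (root g a); last first.
    by have [] := holomorphic_dvdp_unbranched W0 ga holo; split; apply: dvdp_mulr.
  have := holomorphic_dvdp_branched sep_g W0 ga holo.
  have Xa_g : 'X - a%:P %| g by rewrite dvdp_XsubCl.
  case: (mup a _) => [|m] /=; first by rewrite expr0 !dvd1p.
  by rewrite exprSr => -[d1 d2]; split; apply: dvdp_mul.
have d1 : qd_den W %| qd_num1 W * g by apply: dvdp_mup => // a; case: (dvd_num a).
have d2 : qd_den W %| qd_numy W * g by apply: dvdp_mup => // a; case: (dvd_num a).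
set c := sqrtC (lead_coef g); have c0 : c != 0 by rewrite sqrtC_eq0 lead_coef_eq0.
have [s1 s2] := holomorphic_size_at_infinity c0 W0
  (holo (Inf c) (sqrtCK _)) (holo (Inf (- c)) (etrans (sqrrN _) (sqrtCK _))).
have e1 := esym (divpK d1); have e2 := esym (divpK d2).
have := size_cofactor g0 W0 e1 s1; have := size_cofactor g0 W0 e2 s2; rewrite sg => sQ sP.
by exists (qd_num1 W * g %/ qd_den W), (qd_numy W * g %/ qd_den W)`_0; rewrite -size1_polyC.
Qed.

Lemma coef_lowest_mulr p q K : q`_0 != 0 ->
  (forall j, (j < K)%N -> (p * q)`_j = 0) -> (p * q)`_K != 0 -> p`_K != 0.
Proof.
move=> q0 pq_low; rewrite (coefM_lowest q (coef_low_mulr q0 pq_low)).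
by apply: contraNneq => ->; rewrite mul0r.
Qed.

(* Away from the branch points the order of (p + q y) dx^2 / d does not depend
   on the representative: clearing the denominator d against g only shifts the
   local expansion by the multiplicity of w in d. *)
Lemma qd_has_ord_unbranched g W (P Q : {poly F}) w b (k : nat) :
  g.[w] != 0 -> b != 0 -> qd_valid W -> qd_eq W (P, Q, g) ->
  qd_has_ord g (Aff w b) W k%:Z -> qd_has_ord g (Aff w b) (P, Q, g) k%:Z.
Proof.
case: W => [[p q] d] gw b0 d0 [pg qg]; rewrite /qd_has_ord /local_data b0 /=.
rewrite /qd_valid /qd_num1 /qd_numy /qd_den /= in d0 pg qg *.
set m := mup w d; set sh := fun r => r \Po ('X + w%:P); set Y := ps_sqrt _ b.
move=> [n [kmn [S1n S1_low]]]; have nkm : n = (k + m)%N by move: kmn; clear; lia.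
subst n.
set T := ps_trunc (k + m) Y; set S1 := sh p + sh q * T; set S2 := sh P + sh Q * T.
have coef_S (s t : {poly F}) j : (j <= k + m)%N ->
    ps_add (ps_poly (sh s)) (ps_mul (ps_poly (sh t)) Y) j = (sh s + sh t * T)`_j.
  by move=> jn; rewrite /ps_add coefD (ps_mul_poly_trunc _ _ jn).
have [e [ew de]] := mup_factor w d0.
have S1S2 : S1 * sh g = 'X^m * (S2 * sh e).
  rewrite /S1 /S2 mulrDl -mulrA [T * _]mulrC mulrA /sh -!comp_polyM pg qg de.
  by rewrite !comp_polyM comp_XsubCX_XaddC -/(sh _); ring.
have sh_g0 : (sh g)`_0 != 0 by rewrite coef0_comp_XaddC.
have S1_low' j : (j < k + m)%N -> S1`_j = 0 by move=> jn; rewrite -coef_S ?S1_low // ltnW.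
have S2e_low j : (j < k)%N -> (S2 * sh e)`_j = 0.
  move=> jk; have jm : (j + m < k + m)%N by rewrite ltn_add2r.
  by have := coefM_low (sh g) S1_low' jm; rewrite S1S2 coefXnM ltnNge leq_addl addnK.
have S2e_k : (S2 * sh e)`_k != 0.
  have S1n' : S1`_(k + m) != 0 by rewrite -coef_S.
  have : ('X^m * (S2 * sh e))`_(k + m) != 0.
    by rewrite -S1S2 (coefM_lowest _ S1_low') mulf_neq0.
  by rewrite coefXnM ltnNge leq_addl addnK.
have sh_e0 : (sh e)`_0 != 0 by rewrite coef0_comp_XaddC.
rewrite (mupNroot gw); exists k; split; first by rewrite subr0.
rewrite coef_S ?leq_addr //; split; first exact: coef_lowest_mulr sh_e0 S2e_low S2e_k.
by move=> j jk; rewrite coef_S ?(coef_low_mulr sh_e0 S2e_low) //; lia.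
Qed.

Lemma holomorphic_over_g g (P Q : {poly F}) : hyperelliptic_genus3 g ->
  (size P <= 5)%N -> (size Q <= 1)%N -> holomorphic_qd g (P, Q, g).
Proof.
move=> [sg sep_g] sP sQ; split; first by rewrite /qd_valid -size_poly_eq0 sg.
case=> [a b'|c] /= onC; rewrite /qd_ord_ge /local_data /=.
  have [b'0|b'0] := eqVneq b' 0; rewrite ?b'0 /=.
    have ga : root g a by rewrite /root -onC b'0 expr0n.
    by rewrite (mup_separable_root sep_g ga) => n; lia.
  have ga : ~~ root g a by rewrite /root -onC expf_neq0.
  by rewrite (mupNroot ga) => n; lia.
rewrite /qd_num1 /qd_numy /qd_den /= sg; set M := (_ + _ + _ + 4)%N => j jM.
have {}jM : (j + 4 < M)%N by move: jM; clear; lia.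
rewrite /ps_add /ps_poly coef_poly ifT; last by rewrite ltnS; lia.
rewrite (leq_sizeP _ _ sP) ?add0r; last by lia.
rewrite /ps_mul big1 // => i _; rewrite coef_poly.
case: ifP => _; last by rewrite mul0r.
by rewrite (leq_sizeP _ _ sQ) ?mul0r //; move: (ltn_ord i); lia.
Qed.

Lemma qd_eq_sym W1 W2 : qd_eq W1 W2 -> qd_eq W2 W1.
Proof. by case=> e1 e2; split. Qed.

Lemma qd_eq_trans W2 W1 W3 : qd_valid W2 -> qd_eq W1 W2 -> qd_eq W2 W3 -> qd_eq W1 W3.
Proof.
move=> W2_0 [e11 e12] [e21 e22]; split; apply: (mulIf W2_0).
  by rewrite mulrAC e11 mulrAC e21 mulrAC.
by rewrite mulrAC e12 mulrAC e22 mulrAC.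
Qed.

Lemma qd_eq_big g (I : Type) (r : seq I) (f : I -> qdiff F) :
  (forall i, qd_den (f i) = g) ->
  qd_den (\big[@qd_add F/qd_zero F]_(i <- r) f i) = g ^+ size r /\
  qd_eq (\big[@qd_add F/qd_zero F]_(i <- r) f i)
        (\sum_(i <- r) qd_num1 (f i), \sum_(i <- r) qd_numy (f i), g).
Proof.
move=> den_f; elim: r => [|x r [IHd [IH1 IHy]]]; first by rewrite !big_nil /qd_eq /= !mul0r.
rewrite big_cons; set B := \big[_/_]_(i <- r) f i in IHd IH1 IHy *.
rewrite /qd_eq /qd_add /qd_num1 /qd_numy /qd_den /= in den_f IHd IH1 IHy *.
rewrite !big_cons IHd in IH1 IHy *; rewrite den_f exprS.
by split => //; split; rewrite mulrDl -[_ * _ * g]mulrA ?IH1 ?IHy; ring.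
Qed.

Lemma qd_eq_lincomb g (c : 'I_6 -> F) (psi : 'I_6 -> qdiff F) :
  (forall i, qd_den (psi i) = g) ->
  qd_den (lincomb c psi) = g ^+ 6 /\
  qd_eq (lincomb c psi)
        (\sum_(i < 6) c i *: qd_num1 (psi i), \sum_(i < 6) c i *: qd_numy (psi i), g).
Proof.
move=> den_psi; have := @qd_eq_big g _ (index_enum 'I_6) (fun i => qd_scale (c i) (psi i)) den_psi.
have -> : size (index_enum 'I_6) = 6%N by rewrite /index_enum -enumT size_enum_ord.
exact.
Qed.

Lemma incr_gap (f : nat -> nat) i j : (forall k, (k < j)%N -> (f k < f k.+1)%N) ->
  (i <= j)%N -> (f i + (j - i) <= f j)%N.
Proof.
elim: j => [|j IH] f_incr ij; first by move: ij; rewrite leqn0 => /eqP ->; rewrite addn0.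
case: (ltngtP i j.+1) ij => [ij _|//|-> _]; last by rewrite subnn addn0.
have := IH (fun k kj => f_incr k (ltnW kj)) ij; have := f_incr j (ltnSn j); lia.
Qed.

Definition unbranched_ord (N : nat) (i : 'I_6) : nat := if (i < 5)%N then nat_of_ord i else N.

Lemma unbranched_ord_incr N : (5 <= N)%N -> {homo unbranched_ord N : i j / (i < j)%N}.
Proof.
move=> N5 i j; have := ltn_ord i; have := ltn_ord j.
by rewrite /unbranched_ord; case: (ltnP i 5); case: (ltnP j 5); lia.
Qed.

Lemma incr_orders_eq N (o : 'I_6 -> nat) : {homo o : i j / (i < j)%N} ->
  (forall i, (o i <= 4)%N \/ o i = N) -> o =1 unbranched_ord N.
Proof.
move=> o_incr o_vals i; set f := fun k => o (inord k).
have gap k l : (k <= l <= 5)%N -> (f k + (l - k) <= f l)%N.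
  case/andP=> kl l5; apply: incr_gap kl => m ml; apply: o_incr.
  by rewrite !inordK //; lia.
have f_vals k : (f k <= 4)%N \/ f k = N := o_vals _.
have f5 : f 5%N = N by have := gap 0%N 5%N isT; case: (f_vals 5%N) => //; lia.
have f4 : (f 4%N <= 4)%N by have := gap 4%N 5%N isT; case: (f_vals 4%N) => //; lia.
rewrite -(inord_val i) -[o _]/(f i) /unbranched_ord inordK //.
case: (ltnP i 5) => i5; last by have -> : nat_of_ord i = 5%N by have := ltn_ord i; lia.
by have := gap 0%N i; have := gap i 4%N; lia.
Qed.

Lemma weight_unbranched_ord N : (5 <= N)%N -> weight_of (unbranched_ord N) = (N - 5)%N.
Proof. by move=> N5; rewrite /weight_of !big_ord_recr big_ord0 /unbranched_ord /=; lia. Qed.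

Lemma sum_XsubCX_coef p a n : (size p <= n)%N ->
  \sum_(j < n) p`_j *: ('X - a%:P) ^+ j = p \Po ('X - a%:P).
Proof.
move=> sp; rewrite [in RHS](_ : p = \poly_(j < n) p`_j); last first.
  by apply/polyP => j; rewrite coef_poly; case: ltnP => // /(leq_trans sp)/leq_sizeP ->.
by rewrite poly_def linear_sum; apply: eq_bigr => j _; rewrite linearZ /= comp_Xn_poly.
Qed.

Lemma coef_comp_sum_XsubCX n (c : 'I_n -> F) a (i : 'I_n) :
  ((\sum_(j < n) c j *: ('X - a%:P) ^+ j) \Po ('X + a%:P))`_i = c i.
Proof.
rewrite linear_sum coef_sum (bigD1 i) //= big1 => [|j ji].
  by rewrite linearZ /= comp_XsubCX_XaddC coefZ coefXn eqxx mulr1 addr0.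
by rewrite linearZ /= comp_XsubCX_XaddC coefZ coefXn val_eqE eq_sym (negPf ji) mulr0.
Qed.

Section UnbranchedPoint.
Variables (g : {poly F}) (w b : F) (N : nat).
Hypotheses (hyp_g : hyperelliptic_genus3 g) (gw : g.[w] != 0) (b0 : b != 0).
Hypothesis N5 : (5 <= N)%N.

Let Y := ps_sqrt (ps_poly (g \Po ('X + w%:P))) b.
Hypotheses (YN : Y N != 0) (Y_gap : forall n, (5 <= n < N)%N -> Y n = 0).

(* The local expansion of (P + c y) dx^2 / g at (w, b) is P(w + t) + c Y(t),
   whose coefficients of degree >= 5 are those of c Y. *)
Lemma ord_normal_form (P : {poly F}) c k : (size P <= 5)%N ->
  qd_has_ord g (Aff w b) (P, c%:P, g) k%:Z -> (k <= 4)%N \/ k = N.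
Proof.
rewrite /qd_has_ord /local_data b0 /= (mupNroot gw) comp_polyC => sP [n [kn [Sn S_low]]].
have nk : n = k by move: kn; clear; lia.
subst n; set S := ps_add _ _ in Sn S_low.
have sPw : (size (P \Po ('X + w%:P)) <= 5)%N by rewrite size_comp_poly2 ?size_XaddC.
have coefS j : (5 <= j)%N -> S j = c * Y j.
  by move=> j5; rewrite /S /ps_add ps_mul_polyC /ps_poly (leq_sizeP _ _ sPw) ?add0r.
case: (leqP k 4) => [|k5]; [by left | right].
have cYk : c * Y k != 0 by rewrite -coefS.
case: (ltngtP k N) => [kN|Nk|//]; first by move: cYk; rewrite Y_gap ?mulr0 ?eqxx // k5 kN.
have := S_low N Nk; rewrite coefS // => /eqP; rewrite mulf_eq0 (negPf YN) orbF => /eqP c0.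
by move: cYk; rewrite c0 mul0r eqxx.
Qed.

Lemma holomorphic_ord_unbranched W k : holomorphic_qd g W ->
  qd_has_ord g (Aff w b) W k%:Z -> (k <= 4)%N \/ k = N.
Proof.
move=> holo ordW; have [P [c [sP eqW]]] := holomorphic_qd_shape hyp_g holo.
exact: ord_normal_form sP (qd_has_ord_unbranched gw b0 holo.1 eqW ordW).
Qed.

Definition y_jet : {poly F} := \poly_(k < 5) Y k.

Definition unbranched_basis (i : 'I_6) : qdiff F :=
  if (i < 5)%N then (('X - w%:P) ^+ i, 0, g) else (- (y_jet \Po ('X - w%:P)), 1, g).

Lemma unbranched_basis_den i : qd_den (unbranched_basis i) = g.
Proof. by rewrite /unbranched_basis; case: ifP. Qed.

Lemma unbranched_basis_holomorphic i : holomorphic_qd g (unbranched_basis i).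
Proof.
rewrite /unbranched_basis; case: ifP => i5; apply: holomorphic_over_g;
  rewrite ?size_exp_XsubC ?size_poly0 ?size_poly1 ?size_polyN //.
by rewrite size_comp_poly2 ?size_XsubC // size_poly.
Qed.

Lemma unbranched_basis_ord i :
  qd_has_ord g (Aff w b) (unbranched_basis i) (unbranched_ord N i)%:Z.
Proof.
rewrite /qd_has_ord /local_data b0 /= unbranched_basis_den (mupNroot gw).
exists (unbranched_ord N i); split; first by rewrite subr0.
rewrite /unbranched_basis /unbranched_ord; case: ifP => i5 /=.
  rewrite comp_XsubCX_XaddC comp_poly0 /ps_add -polyC0.
  split; first by rewrite ps_mul_polyC mul0r addr0 /ps_poly coefXn eqxx oner_neq0.
  by move=> j ji; rewrite ps_mul_polyC mul0r addr0 /ps_poly coefXn ltn_eqF.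
rewrite raddfN /= comp_polyXsubC_K -polyC1 comp_polyC /ps_add.
have coefS j : ps_poly (- y_jet) j + ps_mul (ps_poly 1%:P) Y j = if (j < 5)%N then 0 else Y j.
  rewrite ps_mul_polyC mul1r /ps_poly coefN coef_poly.
  by case: ifP => _; rewrite ?addNr ?oppr0 ?add0r.
split; first by rewrite coefS ltnNge N5.
by move=> j jN; rewrite coefS; case: ltnP => // j5; rewrite Y_gap // j5.
Qed.

Lemma sum_unbranched_basis_numy (c : 'I_6 -> F) :
  \sum_(i < 6) c i *: qd_numy (unbranched_basis i) = (c ord_max)%:P.
Proof.
rewrite big_ord_recr big1 /=; last by move=> j _; rewrite /unbranched_basis /= ltn_ord scaler0.
by rewrite /unbranched_basis /qd_numy /= add0r alg_polyC.
Qed.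

Lemma sum_unbranched_basis_num1 (c : 'I_6 -> F) :
  \sum_(i < 6) c i *: qd_num1 (unbranched_basis i) =
  \sum_(j < 5) c (widen_ord (leqnSn 5) j) *: ('X - w%:P) ^+ j
  - c ord_max *: (y_jet \Po ('X - w%:P)).
Proof.
rewrite big_ord_recr /= /unbranched_basis /= scalerN; congr (_ - _).
by apply: eq_bigr => j _; rewrite /= ltn_ord.
Qed.

Lemma unbranched_basis_free (c : 'I_6 -> F) :
  qd_eq (lincomb c unbranched_basis) (qd_zero F) -> forall i, c i = 0.
Proof.
move=> L0; have g0 : g != 0 by rewrite -size_poly_eq0 hyp_g.1.
have [L_den L_eq] := qd_eq_lincomb c unbranched_basis_den.
have L_valid : qd_valid (lincomb c unbranched_basis) by rewrite /qd_valid L_den expf_neq0.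
have [] := qd_eq_trans L_valid (qd_eq_sym L_eq) L0.
rewrite /qd_num1 /qd_numy /qd_den /= !mulr1 !mul0r.
rewrite sum_unbranched_basis_numy sum_unbranched_basis_num1 => sum0 /polyC_inj c5.
rewrite c5 scale0r subr0 in sum0; move=> i; have [i5|i5] := ltnP i 5.
  have := congr1 (fun p => (p \Po ('X + w%:P))`_(Ordinal i5)) sum0.
  by rewrite coef_comp_sum_XsubCX comp_poly0 coef0; congr (c _ = 0); apply: val_inj.
suff -> : i = ord_max by [].
by apply: val_inj; have := ltn_ord i; rewrite /=; lia.
Qed.

Lemma unbranched_basis_span W : holomorphic_qd g W ->
  exists c, qd_eq W (lincomb c unbranched_basis).
Proof.
move=> holo; have [P [c0 [sP eqW]]] := holomorphic_qd_shape hyp_g holo.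
have g0 : g != 0 by rewrite -size_poly_eq0 hyp_g.1.
set R := (P + c0 *: (y_jet \Po ('X - w%:P))) \Po ('X + w%:P).
have sR : (size R <= 5)%N.
  rewrite size_comp_poly2 ?size_XaddC // (leq_trans (size_polyD _ _)) // geq_max sP.
  by rewrite (leq_trans (size_scale_leq _ _)) // size_comp_poly2 ?size_XsubC // size_poly.
exists (fun i : 'I_6 => if (i < 5)%N then R`_i else c0).
apply: (qd_eq_trans _ eqW) => //; apply: qd_eq_sym.
have [_] := qd_eq_lincomb (fun i : 'I_6 => if (i < 5)%N then R`_i else c0) unbranched_basis_den.
rewrite sum_unbranched_basis_numy sum_unbranched_basis_num1 /=.
under eq_bigr do rewrite ltn_ord.
by rewrite (sum_XsubCX_coef _ sR) comp_polyXaddC_K addrK.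
Qed.

Lemma unbranched_adapted_basis :
  adapted_basis g (Aff w b) unbranched_basis (unbranched_ord N).
Proof.
split; first split; [|split|split].
- exact: unbranched_basis_holomorphic.
- exact: unbranched_basis_free.
- exact: unbranched_basis_span.
- exact: unbranched_basis_ord.
- exact: unbranched_ord_incr.
Qed.

Lemma two_weight_unbranched : two_weight g (Aff w b) (N - 5) /\
  forall wt, two_weight g (Aff w b) wt -> wt = (N - 5)%N.
Proof.
split.
  exists unbranched_basis, (unbranched_ord N); split; first exact: unbranched_adapted_basis.
  by rewrite weight_unbranched_ord.
move=> wt [psi [o [[[holo _] [ord_o o_incr]] ->]]].
have vals j : (o j <= 4)%N \/ o j = N := holomorphic_ord_unbranched (holo j) (ord_o j).
rewrite -(weight_unbranched_ord N5); apply: eq_bigr => i _.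
by rewrite (incr_orders_eq o_incr vals).
Qed.

End UnbranchedPoint.

Lemma branch_deriv_eq0 g w b n :
  (branch_deriv g w b n == 0) = (ps_sqrt (ps_poly (g \Po ('X + w%:P))) b n == 0).
Proof. by rewrite /branch_deriv mulf_eq0 pnatr_eq0 gtn_eqF ?fact_gt0. Qed.

End Hyperelliptic.

Theorem mainTheorem4 (g : {poly (Rdefinitions.R)[i]}) (w b : (Rdefinitions.R)[i])
    (N : nat) :
  hyperelliptic_genus3 g ->
  g.[w] != 0 ->
  b ^+ 2 = g.[w] ->
  (5 <= N)%N ->
  branch_deriv g w b N != 0 ->
  (forall n, (5 <= n < N)%N -> branch_deriv g w b n = 0) ->
  [/\ two_weight g (Aff w b) (N - 5)%N,
      (forall wt, two_weight g (Aff w b) wt -> wt = (N - 5)%N) &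
      ((exists wt, two_weight g (Aff w b) wt /\ (0 < wt)%N) <->
        branch_deriv g w b 5 = 0)].
Proof.
move=> hyp_g gw b2 N5 dN d_gap.
have b0 : b != 0 by apply: contraNneq gw => b0; rewrite -b2 b0 expr0n.
have YN := dN; rewrite branch_deriv_eq0 in YN.
have Y_gap n : (5 <= n < N)%N -> ps_sqrt (ps_poly (g \Po ('X + w%:P))) b n = 0.
  by move=> nN; apply/eqP; rewrite -branch_deriv_eq0 d_gap.
have [wt_N wt_uniq] := two_weight_unbranched hyp_g gw b0 N5 YN Y_gap.
split => //; split => [[wt [/wt_uniq -> wt_gt0]]|d5]; first by apply: d_gap; lia.
exists (N - 5)%N; split => //; suff : N != 5%N by lia.
by apply: contraNneq dN => ->; rewrite d5.
Qed.
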